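(* Assume (A.1) and (A.2). Let $\mathcal F_{co}^+$, $U_{\mathbb V}$, $(p^*_{co},q^*_{co})$ and the lines $\mathbb L_1,\dots,\mathbb L_4$ be as in the context. (i) If $(p^*_{co},q^*_{co})$ lies in the interior of $\mathcal F^+_{co}$, then $$\max_{(p,q)\in\mathcal F^+_{co}} U_{\mathbb V}(p,q)=U_{\mathbb V}(p^*_{co},q^*_{co}).$$ (ii) If $(p^*_{co},q^*_{co})$ does not lie in the interior of $\mathcal F^+_{co}$, then the maximum of $U_{\mathbb V}$ over $\mathcal F^+_{co}$ is attained on one of the non-empty boundary pieces other than the lines $\{q=0\}$ and $\{p=0\}$: $$\max_{(p,q)\in\mathcal F^+_{co}} U_{\mathbb V}(p,q)=\max_{l\in\{1,2,3,4\}}\Big\{\max_{(p,q)\in\mathcal F^+_{co}\cap\mathbb L_l} U_{\mathbb V}(p,q)\Big\},$$ where by convention the maximum over an empty set is $0$.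
   Context: Model (a Stackelberg pricing game). Parameters: market potentials $\bar d_i,\bar d_j>0$; price sensitivities $\alpha_i,\alpha_j>0$; substitutability $\varepsilon\in(0,1]$; per-unit production costs $C_i,C_j\ge0$, per-unit raw-material cost $C_S\ge0$; operating costs $O_i,O_j,O_S\ge 0$. A coalition $\mathbb V$ (supplier plus in-house manufacturer $M_i$) quotes a consumer price $p$ and a wholesale price $q$; the out-house manufacturer $M_j$ then quotes a consumer price $\tilde p$. Demands: $D_i=(\bar d_i-\alpha_i p+\varepsilon\alpha_j\tilde p)^+$, $D_j=(\bar d_j-\alpha_j\tilde p+\varepsilon\alpha_i p)^+$. Maximal prices: $p_{mx}=(\bar d_i+\varepsilon\bar d_j)/\alpha_i$, $\tilde p_{mx}=(\bar d_j+\varepsilon\bar d_i)/\alpha_j$. Let $p_{sw}=\bar d_i/\alpha_i+\sqrt{\alpha_jO_j}/(\varepsilon\alpha_i)$ and $$\theta(p)=\begin{cases}\dfrac{\bar d_j+\varepsilon\alpha_ip-\alpha_jC_j-2\sqrt{\alpha_jO_j}}{\alpha_j}, & p<p_{sw},\\[2mm] \dfrac{\bar d_j+\varepsilon\bar d_i-\alpha_jC_j}{\alpha_j}-\dfrac{\alpha_jO_j}{\alpha_j(\varepsilon\alpha_ip-\varepsilon\bar d_i)}, & p\ge p_{sw}.\end{cases}$$ When $q\le\theta(p)$, $M_j$'s best response is $\tilde p^*(p,q)=\min\{(\bar d_j+\varepsilon\alpha_ip)/(2\alpha_j)+(C_j+q)/2,\ \tilde p_{mx}\}$ (when $q>\theta(p)$,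 $M_j$ does not operate). Co-existence region: $\mathcal F_{co}=\{(p,q)\in(0,\infty)^2: q\le\theta(p)\}$. For $(p,q)\in\mathcal F_{co}$ the coalition's utility is $$U_{\mathbb V}(p,q)=(\bar d_i-\alpha_ip+\varepsilon\alpha_j\tilde p^*(p,q))^+(p-C_i-C_S)+(\bar d_j+\varepsilon\alpha_ip-\alpha_j\tilde p^*(p,q))^+(q-C_S)-O_i-O_S.$$ Unconstrained function: $U(p,q)$ is the same expression with $(\cdot)^+$ removed and $\tilde p^*(p,q)$ replaced by $(\bar d_j+\varepsilon\alpha_ip)/(2\alpha_j)+(C_j+q)/2$; equivalently $U(p,q)=w_1p^2+w_2pq+w_3q^2+w_4p+w_5q+w_6$ with $w_1=-\alpha_i(1-\varepsilon^2/2)$, $w_2=\varepsilon(\alpha_i+\alpha_j)/2$, $w_3=-\alpha_j/2$, $w_4=\tfrac12\big(2\bar d_i+\varepsilon\bar d_j+\varepsilon\alpha_jC_j-\varepsilon\alpha_iC_S+2\alpha_i(1-\varepsilon^2/2)(C_i+C_S)\big)$, $w_5=-\varepsilon\alpha_j(C_i+C_S)/2+(\bar d_j-\alpha_jC_j+\alpha_jC_S)/2$, and $w_6$ a constant. Its critical point is $p^*_{co}=-(2w_3w_4-w_2w_5)/(4w_1w_3-w_2^2)$, $q^*_{co}=-(w_2p^*_{co}+w_5)/(2w_3)$. Define $\phi(p)=(\bar d_j+2\varepsilon\bar d_i-\varepsilon\alpha_ip-\alpha_jC_j)/\alpha_j$ and $\psi(q)=\big(2\bar d_i+\varepsilon\bar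 d_j+\varepsilon\alpha_j(C_j+q)\big)/((2-\varepsilon^2)\alpha_i)$. Then $$\mathcal F^+_{co}=\{(p,q)\in[0,\infty)^2: p\le\min\{p_{mx},\psi(q)\},\ q\le\min\{\theta(p),\phi(p)\}\},$$ the region where both manufacturers have positive demand and $M_j$'s price is unsaturated. Lines: $\mathbb L_1=\{q=\phi(p)\}$, $\mathbb L_2=\{p=\psi(q)\}$, $\mathbb L_3=\{q=(\bar d_j+\varepsilon\alpha_ip-\alpha_jC_j-2\sqrt{\alpha_jO_j})/\alpha_j\}$, $\mathbb L_4=\{p=p_{mx}\}$. Assumption (A.1): $\bar d_i\ge\alpha_i(C_S+C_i)+2\sqrt{\alpha_i(O_S+O_i)}$ and $\bar d_j\ge\alpha_j(C_S+C_j)+2\max\{\sqrt{2\alpha_j(O_S+O_i)},\sqrt{\alpha_jO_j}\}$. Assumption (A.2): $\varepsilon\le 2\sqrt{\alpha_jO_j}/(\alpha_jC_i)$. *)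

From HB Require Import structures.
From mathcomp Require Import all_boot all_order all_algebra.
From mathcomp Require Import all_classical all_reals topology normedtype.
Set Implicit Arguments. Unset Strict Implicit. Unset Printing Implicit Defensive.
Import Order.TTheory GRing.Theory Num.Theory.
Import numFieldNormedType.Exports.
Local Open Scope ring_scope.
Local Open Scope classical_set_scope.

Record params (R : realType) := Params {
  di : R; dj : R;        (* market potentials \bar d_i, \bar d_j *)
  ai : R; aj : R;        (* price sensitivities alpha_i, alpha_j *)
  eps : R;               (* substitutability epsilon *)
  Ci : R; Cj : R; CS : R;(* per-unit costs *)
  Oi : R; Oj : R; OS : R (* operating costs *)
}.

Section Model.
Variables (R : realType) (P : params R).
Local Notation di := (di P). Local Notation dj := (dj P).
Local Notation ai := (ai P). Local Notation aj := (aj P).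
Local Notation eps := (eps P).
Local Notation Ci := (Ci P). Local Notation Cj := (Cj P). Local Notation CS := (CS P).
Local Notation Oi := (Oi P). Local Notation Oj := (Oj P). Local Notation OS := (OS P).

Definition posp (x : R) : R := Num.max 0 x.

Definition p_mx : R := (di + eps * dj) / ai.
Definition pt_mx : R := (dj + eps * di) / aj.
Definition p_sw : R := di / ai + Num.sqrt (aj * Oj) / (eps * ai).

Definition theta (p : R) : R :=
  if p < p_sw then (dj + eps * ai * p - aj * Cj - 2 * Num.sqrt (aj * Oj)) / aj
  else (dj + eps * di - aj * Cj) / aj - (aj * Oj) / (aj * (eps * ai * p - eps * di)).

(* unsaturated best response of M_j *)
Definition pt_un (p q : R) : R := (dj + eps * ai * p) / (2 * aj) + (Cj + q) / 2.
(* best response of M_j when q <= theta p *)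
Definition pt_star (p q : R) : R := Num.min (pt_un p q) pt_mx.

Definition UV (p q : R) : R :=
  posp (di - ai * p + eps * aj * pt_star p q) * (p - Ci - CS)
  + posp (dj + eps * ai * p - aj * pt_star p q) * (q - CS) - Oi - OS.

Definition w1 : R := - ai * (1 - eps ^+ 2 / 2).
Definition w2 : R := eps * (ai + aj) / 2.
Definition w3 : R := - aj / 2.
Definition w4 : R := (2 * di + eps * dj + eps * aj * Cj - eps * ai * CS
                      + 2 * ai * (1 - eps ^+ 2 / 2) * (Ci + CS)) / 2.
Definition w5 : R := - eps * aj * (Ci + CS) / 2 + (dj - aj * Cj + aj * CS) / 2.

Definition p_co : R := - (2 * w3 * w4 - w2 * w5) / (4 * w1 * w3 - w2 ^+ 2).
Definition q_co : R := - (w2 * p_co + w5) / (2 * w3).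

Definition phi (p : R) : R := (dj + 2 * eps * di - eps * ai * p - aj * Cj) / aj.
Definition psi (q : R) : R :=
  (2 * di + eps * dj + eps * aj * (Cj + q)) / ((2 - eps ^+ 2) * ai).

Definition Fplus : set (R * R) :=
  [set x | 0 <= x.1 /\ 0 <= x.2 /\ x.1 <= Num.min p_mx (psi x.2)
           /\ x.2 <= Num.min (theta x.1) (phi x.1)].

Definition L1 : set (R * R) := [set x | x.2 = phi x.1].
Definition L2 : set (R * R) := [set x | x.1 = psi x.2].
Definition L3 : set (R * R) :=
  [set x | x.2 = (dj + eps * ai * x.1 - aj * Cj - 2 * Num.sqrt (aj * Oj)) / aj].
Definition L4 : set (R * R) := [set x | x.1 = p_mx].

Definition A1 : Prop :=
  ai * (CS + Ci) + 2 * Num.sqrt (ai * (OS + Oi)) <= di /\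
  aj * (CS + Cj) + 2 * Num.max (Num.sqrt (2 * aj * (OS + Oi))) (Num.sqrt (aj * Oj)) <= dj.
(* (A.2) eps <= 2 sqrt(aj Oj)/(aj Ci), cleared of the denominator
   (with Ci = 0 the bound is +oo, i.e. vacuous) *)
Definition A2 : Prop := eps * (aj * Ci) <= 2 * Num.sqrt (aj * Oj).

Definition standing : Prop :=
  0 < di /\ 0 < dj /\ 0 < ai /\ 0 < aj /\ 0 < eps /\ eps <= 1 /\
  0 <= Ci /\ 0 <= Cj /\ 0 <= CS /\ 0 <= Oi /\ 0 <= Oj /\ 0 <= OS.
End Model.

Definition is_max (R : realType) (S : set (R * R)) (f : R * R -> R) (m : R) : Prop :=
  (exists2 x, S x & f x = m) /\ (forall x, S x -> f x <= m).

Definition is_max0 (R : realType) (S : set (R * R)) (f : R * R -> R) (m : R) : Prop :=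
  (S = set0 /\ m = 0) \/ is_max S f m.

(* On F^+_co the second branch of [theta] never binds (it lies above [phi]), the price of
   M_j is unsaturated and both demands are nonnegative, so U_V coincides with the quadratic
   U, and F^+_co is the compact polygon cut out by p >= 0, q >= 0 and the lines L1, ..., L4.
   At a critical point with positive demands, Cramer's rule gives
   det * (p - Ci - CS) = aj Di0 + w2 Dj0, where Di0 > 0 and Dj0 >= 0 are the demands at
   cost prices (by (A.1)); the demands also force p - Ci - CS > 0, so the Hessian
   determinant det = 4 w1 w3 - w2^2 is positive and U is concave.
   For (ii), a maximiser lying on none of L1, ..., L4 satisfies one-sided first-order
   conditions; as w2, w4 > 0 and w5 >= 0 (this is where (A.2) enters) it cannot lie on
   p = 0 or q = 0, so it is a critical point with positive demands, i.e. (p*_co, q*_co),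
   which would then be interior. Finally U_V >= 0 at the monopoly price of M_i, so the
   convention that the maximum over the empty set is 0 is harmless. *)

From HB Require Import structures.
From mathcomp Require Import all_boot all_order all_algebra.
From mathcomp Require Import all_classical all_reals topology normedtype.
From mathcomp Require Import ring lra derive.
Import Order.TTheory GRing.Theory Num.Theory.
Import numFieldNormedType.Exports.
Local Open Scope ring_scope.
Local Open Scope classical_set_scope.
Set Implicit Arguments. Unset Strict Implicit. Unset Printing Implicit Defensive.

Section RealFacts.
Variable R : realFieldType.

Lemma quad_form_le0 (a b c x y : R) : a < 0 -> 0 < 4 * a * c - b ^+ 2 ->
  a * x ^+ 2 + b * x * y + c * y ^+ 2 <= 0.
Proof.
move=> a_lt0 det_gt0.
have key : 4 * a * (a * x ^+ 2 + b * x * y + c * y ^+ 2)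
    = (2 * a * x + b * y) ^+ 2 + (4 * a * c - b ^+ 2) * y ^+ 2 by ring.
have : 0 <= 4 * a * (a * x ^+ 2 + b * x * y + c * y ^+ 2).
  by rewrite key addr_ge0 ?sqr_ge0 // mulr_ge0 ?sqr_ge0 // ltW.
by rewrite -mulrA pmulr_rge0 // nmulr_rge0.
Qed.

Lemma slope_le0 (g h e : R) : 0 < e ->
  (forall t, 0 < t -> t < e -> t * g + h * t ^+ 2 <= 0) -> g <= 0.
Proof.
move=> e_gt0 hle; rewrite leNgt; apply/negP => g_gt0.
pose t := Num.min (e / 2) (g / (2 * (`|h| + 1))).
have t_gt0 : 0 < t by rewrite lt_min !divr_gt0 // ?mulr_gt0 // ltr_wpDl.
have t_lt_e : t < e by rewrite gt_min ltr_pdivrMr //; lra.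
have ht : t * (2 * (`|h| + 1)) <= g.
  by rewrite -ler_pdivlMr ?mulr_gt0 ?ltr_wpDl // ge_min lexx orbT.
have hh : - (`|h| * t ^+ 2) <= h * t ^+ 2.
  by rewrite -mulNr ler_pM2r ?exprn_gt0 // lerNl -normrN ler_norm.
have := hle t t_gt0 t_lt_e; rewrite expr2 in hh *; nra.
Qed.

End RealFacts.

Section PlaneTopology.
Variable R : realType.

Lemma closed_le_fun (T : topologicalType) (f g : T -> R) :
  continuous f -> continuous g -> closed [set x | f x <= g x].
Proof.
move=> fc gc; have -> : [set x | f x <= g x] = (g - f) @^-1` [set y | 0 <= y].
  by apply/seteqP; split => x /=; rewrite subr_ge0.
by apply: preimage_closed; [move=> x _; exact: continuousB (gc x) (fc x) | exact: closed_ge].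
Qed.

Lemma closed_eq_fun (T : topologicalType) (f g : T -> R) :
  continuous f -> continuous g -> closed [set x | f x = g x].
Proof.
move=> fc gc; have -> : [set x | f x = g x] = [set x | f x <= g x] `&` [set x | g x <= f x].
  by apply/seteqP; split => x /=; [move=> -> | case=> *; apply/eqP; rewrite eq_le; apply/andP].
by apply: closedI; apply: closed_le_fun.
Qed.

Lemma open_lt_fun (T : topologicalType) (f g : T -> R) :
  continuous f -> continuous g -> open [set x | f x < g x].
Proof.
move=> fc gc; have -> : [set x | f x < g x] = (g - f) @^-1` [set y | 0 < y].
  by apply/seteqP; split => x /=; rewrite subr_gt0.
by apply: open_comp; [move=> x _; exact: continuousB (gc x) (fc x) | exact: open_gt].
Qed.

Lemma affine_continuous (f : R * R -> R) :
  (forall x, f x = f (0, 0) + (f (1, 0) - f (0, 0)) * x.1 + (f (0, 1) - f (0, 0)) * x.2) ->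
  continuous f.
Proof.
move=> fE; have -> : f = fun x => f (0, 0) + (f (1, 0) - f (0, 0)) * x.1
                                      + (f (0, 1) - f (0, 0)) * x.2 by apply: funext.
move=> x; apply: cvgD; last by apply: cvgM; [exact: cvg_cst | exact: cvg_snd].
by apply: cvgD; [exact: cvg_cst | apply: cvgM; [exact: cvg_cst | exact: cvg_fst]].
Qed.

Lemma nbhs_shift (x : R * R) (A : set (R * R)) : nbhs x A ->
  exists2 e, 0 < e & forall u v, `|u| < e -> `|v| < e -> A (x.1 + u, x.2 + v).
Proof.
move/nbhs_ballP => [e e_gt0 hA]; exists e => // u v hu hv; apply: hA.
by rewrite /ball /= /prod_ball /= -!ball_normE /ball_ /= !opprD !addrA !subrr !add0r !normrN.
Qed.

End PlaneTopology.

Section Maxima.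
Variable R : realType.

Lemma compact_argmax (T : topologicalType) (S : set T) (f : T -> R) :
  S !=set0 -> compact S -> continuous f -> exists2 c, S c & forall x, S x -> f x <= f c.
Proof.
move=> S0 cS cf; have [c /set_mem Sc cmax] := compact_EVT_max S0 cS (continuous_subspaceT cf).
by exists c => // x /mem_set /cmax.
Qed.

Lemma exists_is_max0 (S : set (R * R)) (f g : R * R -> R) :
  compact S -> continuous g -> (forall x, S x -> f x = g x) -> exists m, is_max0 S f m.
Proof.
move=> cS cg fg; have [->|S0] := eqVneq S set0; first by exists 0; left.
move/set0P: S0 => S0; have [c Sc cmax] := compact_argmax S0 cS cg.
exists (f c); right; split; first by exists c.
by move=> x Sx; rewrite !fg //; exact: cmax.
Qed.

Lemma is_max0_le (S : set (R * R)) (f : R * R -> R) m M : 0 <= M ->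
  (forall x, S x -> f x <= M) -> is_max0 S f m -> m <= M.
Proof. by move=> M_ge0 fM [[_ ->] | [[x Sx <-] _]] //; exact: fM. Qed.

Lemma is_max0_ge (S : set (R * R)) (f : R * R -> R) m y :
  S y -> is_max0 S f m -> f y <= m.
Proof. by move=> Sy [[S0 _] | [_ fm]]; [move: Sy; rewrite S0 | exact: fm]. Qed.

End Maxima.

Section Model.
Variables (R : realType) (P : params R).
Local Notation di := (di P). Local Notation dj := (dj P).
Local Notation ai := (ai P). Local Notation aj := (aj P).
Local Notation eps := (eps P).
Local Notation Ci := (Ci P). Local Notation Cj := (Cj P). Local Notation CS := (CS P).
Local Notation Oi := (Oi P). Local Notation Oj := (Oj P). Local Notation OS := (OS P).
Local Notation p_mx := (p_mx P). Local Notation pt_mx := (pt_mx P).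
Local Notation pt_un := (pt_un P). Local Notation psi := (psi P). Local Notation phi := (phi P).
Local Notation w1 := (w1 P). Local Notation w2 := (w2 P). Local Notation w3 := (w3 P).
Local Notation w4 := (w4 P). Local Notation w5 := (w5 P).
Local Notation p_co := (p_co P). Local Notation q_co := (q_co P).
Local Notation sj := (Num.sqrt (aj * Oj)).

Hypotheses (di_gt0 : 0 < di) (dj_gt0 : 0 < dj) (ai_gt0 : 0 < ai) (aj_gt0 : 0 < aj).
Hypotheses (eps_gt0 : 0 < eps) (eps_le1 : eps <= 1).
Hypotheses (Ci_ge0 : 0 <= Ci) (Cj_ge0 : 0 <= Cj) (CS_ge0 : 0 <= CS).
Hypotheses (Oi_ge0 : 0 <= Oi) (Oj_ge0 : 0 <= Oj) (OS_ge0 : 0 <= OS).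

Let eps2_le_eps : eps ^+ 2 <= eps. Proof. by rewrite expr2 ler_piMl // ltW. Qed.
Let sj_ge0 : 0 <= sj. Proof. exact: sqrtr_ge0. Qed.
Let sj_sqr : sj ^+ 2 = aj * Oj. Proof. by rewrite sqr_sqrtr // mulr_ge0 // ltW. Qed.

(* [theta1] is the first branch of [theta] (its graph is [L3]); [Flin] is F^+_co written
   with linear constraints only, see [FplusE]. *)
Definition theta1 (p : R) : R := (dj + eps * ai * p - aj * Cj - 2 * sj) / aj.

Definition Flin : set (R * R) :=
  [set x | 0 <= x.1 /\ 0 <= x.2 /\ x.1 <= p_mx /\ x.1 <= psi x.2
           /\ x.2 <= phi x.1 /\ x.2 <= theta1 x.1].

Definition Fopen : set (R * R) :=
  [set x | [/\ x.1 < p_mx, x.1 < psi x.2, x.2 < phi x.1 & x.2 < theta1 x.1]].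

(* Past [p_sw], [theta1] lies above [phi] and so does the second branch of [theta], because
   [Oj / x <= x / aj] once [x := eps (ai p - di) >= sqrt (aj Oj)]. *)
Lemma min_theta_phi p : Num.min (theta P p) (phi p) = Num.min (theta1 p) (phi p).
Proof.
rewrite /theta; case: ltP => // p_ge.
set x := eps * ai * p - eps * di.
have sj_le_x : sj <= x.
  have : eps * ai * p_sw P <= eps * ai * p by rewrite ler_pM2l ?mulr_gt0.
  have -> : eps * ai * p_sw P = eps * di + sj by rewrite /p_sw; field; rewrite !lt0r_neq0.
  by rewrite /x; lra.
have x_ge0 : 0 <= x := le_trans sj_ge0 sj_le_x.
have phi_le1 : phi p <= theta1 p.
  by rewrite /phi /theta1 ler_pM2r ?invr_gt0 //; rewrite /x in sj_le_x; lra.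
have phi_le2 : phi p <= (dj + eps * di - aj * Cj) / aj - aj * Oj / (aj * x).
  rewrite invfM mulrA [aj * Oj]mulrC (mulfK (lt0r_neq0 aj_gt0)).
  have Oj_le : Oj / x <= x / aj.
    have [->|x_neq0] := eqVneq x 0; first by rewrite invr0 mulr0 mul0r.
    rewrite ler_pdivrMr ?lt_neqAle 1?eq_sym ?x_neq0 // mulrAC ler_pdivlMr //.
    by rewrite mulrC -sj_sqr expr2 ler_pM.
  have -> : phi p = (dj + eps * di - aj * Cj) / aj - x / aj.
    by rewrite /phi /x; field; rewrite ?lt0r_neq0.
  lra.
by rewrite !(minElt _ (phi p)) !ltNge phi_le1 phi_le2.
Qed.

Lemma FplusE : Fplus P = Flin.
Proof.
apply/seteqP; split => x /=; rewrite /Fplus /Flin /= min_theta_phi !le_min.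
  by case=> h1 [h2 [/andP[h3 h4] /andP[h5 h6]]].
by case=> h1 [h2 [h3 [h4 [h5 h6]]]]; rewrite h3 h4 h5 h6.
Qed.

Definition Di (p q : R) : R := di - ai * p + eps * aj * pt_un p q.
Definition Dj (p q : R) : R := dj + eps * ai * p - aj * pt_un p q.
Definition Uquad (p q : R) : R := Di p q * (p - Ci - CS) + Dj p q * (q - CS) - Oi - OS.

Let two_sub_eps2_gt0 : 0 < 2 - eps ^+ 2. Proof. by move: eps_le1 eps2_le_eps; lra. Qed.

Lemma DiE p q : Di p q = (2 - eps ^+ 2) * ai / 2 * (psi q - p).
Proof. by rewrite /Di /pt_un /psi; field; rewrite !lt0r_neq0. Qed.

Lemma DjE p q : Dj p q = aj / 2 * (theta1 p - q) + sj.
Proof. by rewrite /Dj /pt_un /theta1; field; rewrite ?lt0r_neq0. Qed.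

Lemma pt_mx_sub_un p q : pt_mx - pt_un p q = (phi p - q) / 2.
Proof. by rewrite /pt_mx /pt_un /phi; field; rewrite ?lt0r_neq0. Qed.

Lemma UV_Uquad x : Flin x -> UV P x.1 x.2 = Uquad x.1 x.2.
Proof.
case=> p_ge0 [q_ge0 [_ [p_le [q_le_phi q_le_theta]]]].
have pt_unsat : pt_star P x.1 x.2 = pt_un x.1 x.2.
  by apply/min_idPl; rewrite -subr_ge0 pt_mx_sub_un divr_ge0 // subr_ge0.
rewrite /UV pt_unsat /posp !max_r // -/(Dj _ _) -/(Di _ _) ?DjE ?DiE.
  have : 0 <= aj * (theta1 x.1 - x.2) by rewrite mulr_ge0 ?subr_ge0 // ltW.
  by have := sj_ge0; lra.
have : 0 <= (2 - eps ^+ 2) * ai * (psi x.2 - x.1).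
  by rewrite mulr_ge0 ?subr_ge0 // mulr_ge0 ?ltW.
lra.
Qed.

(* Gradient and Hessian determinant of [Uquad = w1 p^2 + w2 p q + w3 q^2 + w4 p + w5 q + w6]. *)
Definition dU1 (p q : R) : R := 2 * w1 * p + w2 * q + w4.
Definition dU2 (p q : R) : R := w2 * p + 2 * w3 * q + w5.
Definition hess_det : R := 4 * w1 * w3 - w2 ^+ 2.

Lemma Uquad_expand p q u v :
  Uquad (p + u) (q + v) - Uquad p q
  = u * dU1 p q + v * dU2 p q + (w1 * u ^+ 2 + w2 * u * v + w3 * v ^+ 2).
Proof.
by rewrite /Uquad /Di /Dj /pt_un /dU1 /dU2 /w1 /w2 /w3 /w4 /w5; field; rewrite lt0r_neq0.
Qed.

Lemma w1_lt0 : w1 < 0.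
Proof. by rewrite /w1 mulNr oppr_lt0 mulr_gt0 //; move: eps_le1 eps2_le_eps; lra. Qed.

Lemma w2_gt0 : 0 < w2.
Proof. by rewrite /w2 divr_gt0 // mulr_gt0 // addr_gt0. Qed.

Lemma w3_neq0 : w3 != 0.
Proof. by rewrite /w3 mulNr oppr_eq0 mulf_neq0 ?invr_eq0 ?lt0r_neq0. Qed.

Lemma w4_gt0 : 0 < w4.
Proof.
rewrite /w4 divr_gt0 //.
have : 0 <= ai * Ci * (2 - eps ^+ 2) by rewrite !mulr_ge0 // ?ltW.
have : 0 <= ai * CS * (2 - eps ^+ 2 - eps).
  by rewrite !mulr_ge0 ?(ltW ai_gt0) //; move: eps_le1 eps2_le_eps; lra.
have : 0 < eps * dj by rewrite mulr_gt0.
have : 0 <= eps * aj * Cj by rewrite !mulr_ge0 // ltW.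
move: di_gt0; lra.
Qed.

Lemma dU_co : hess_det != 0 -> dU1 p_co q_co = 0 /\ dU2 p_co q_co = 0.
Proof.
move=> det_neq0; have w3_neq0 := w3_neq0.
by split; rewrite /dU1 /dU2 /q_co /p_co; field; apply/andP.
Qed.

Lemma critical_unique p q : hess_det != 0 -> dU1 p q = 0 -> dU2 p q = 0 ->
  p = p_co /\ q = q_co.
Proof.
move=> det_neq0 dU1_0 dU2_0.
have cramer : hess_det * p + (2 * w3 * w4 - w2 * w5) = 2 * w3 * dU1 p q - w2 * dU2 p q.
  by rewrite /hess_det /dU1 /dU2; ring.
have det_p : hess_det * p = - (2 * w3 * w4 - w2 * w5).
  by move: cramer; rewrite dU1_0 dU2_0; lra.
have w3_q : 2 * w3 * q = - (w2 * p + w5) by move: dU2_0; rewrite /dU2; lra.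
have p_coE : p = p_co by rewrite /p_co -/hess_det -det_p mulrC mulKf.
split=> //; rewrite /q_co -p_coE -w3_q; field; exact: w3_neq0.
Qed.

Hypothesis A1i : ai * (CS + Ci) + 2 * Num.sqrt (ai * (OS + Oi)) <= di.
(* Of the second half of (A.1) only the [sqrt (aj Oj)] bound is needed. *)
Hypothesis A1j : aj * (CS + Cj) + 2 * sj <= dj.

Lemma demands_at_cost : 0 < Di (Ci + CS) CS /\ 0 <= Dj (Ci + CS) CS.
Proof.
have cost_ge0 : 0 <= Ci + CS by rewrite addr_ge0.
split.
  have : 0 < eps * aj * pt_un (Ci + CS) CS.
    rewrite !mulr_gt0 // /pt_un ltr_pwDl ?divr_ge0 ?addr_ge0 // divr_gt0 ?mulr_gt0 //.
    by rewrite ltr_wpDr // mulr_ge0 // mulr_ge0 // ltW.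
  have := sqrtr_ge0 (ai * (OS + Oi)); move: A1i; rewrite /Di; lra.
rewrite DjE addr_ge0 // mulr_ge0 ?divr_ge0 ?(ltW aj_gt0) // subr_ge0 /theta1.
rewrite ler_pdivlMr // mulrC.
have : 0 <= eps * ai * (Ci + CS) by rewrite !mulr_ge0 // ltW.
by move: A1j; lra.
Qed.

Hypothesis A2 : eps * (aj * Ci) <= 2 * sj.

Lemma w5_ge0 : 0 <= w5.
Proof.
have : 0 <= aj * CS * (2 - eps) by rewrite !mulr_ge0 ?subr_ge0 // ?ltW //; move: eps_le1; lra.
by rewrite /w5; move: A1j A2; lra.
Qed.

Lemma hess_det_gt0 p q : dU1 p q = 0 -> dU2 p q = 0 -> 0 < Di p q -> 0 < Dj p q ->
  0 < hess_det.
Proof.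
move=> dU1_0 dU2_0 Di_gt0 Dj_gt0.
set X := p - (Ci + CS); set Y := q - CS.
have [Di0_gt0 Dj0_ge0] := demands_at_cost.
(* The gradient is affine, equal to the demands at cost prices plus the Hessian applied
   to [(X, Y)]; Cramer's rule solves for [X]. *)
have cramer : hess_det * X
    = aj * Di (Ci + CS) CS + w2 * Dj (Ci + CS) CS - (aj * dU1 p q + w2 * dU2 p q).
  rewrite /hess_det /dU1 /dU2 /Di /Dj /pt_un /w1 /w2 /w3 /w4 /w5 /X /Y.
  by field; rewrite ?lt0r_neq0.
have Dj_pq : Dj p q = aj / 2 * (Y - eps * X) + dU2 p q.
  by rewrite /dU2 /Dj /pt_un /w2 /w3 /w5 /X /Y; field; rewrite ?lt0r_neq0.
have Di_pq : ai * (1 - eps ^+ 2) * X = Di p q + eps * ai / 2 * (Y - eps * X) - dU1 p q.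
  by rewrite /dU1 /Di /pt_un /w1 /w2 /w4 /X /Y; field; rewrite ?lt0r_neq0.
rewrite dU1_0 dU2_0 ?mulr0 ?addr0 ?subr0 in cramer Dj_pq Di_pq.
have Y_gt : 0 < Y - eps * X.
  by move: Dj_gt0; rewrite Dj_pq pmulr_rgt0 // divr_gt0.
have X_gt0 : 0 < X.
  have : 0 < ai * (1 - eps ^+ 2) * X.
    by rewrite Di_pq addr_gt0 // mulr_gt0 // divr_gt0 // mulr_gt0.
  have : 0 <= ai * (1 - eps ^+ 2).
    by rewrite mulr_ge0 ?subr_ge0 ?(ltW ai_gt0) // (le_trans eps2_le_eps).
  move=> coef_ge0 cX_gt0; rewrite ltNge; apply/negP => X_le0.
  by move: cX_gt0; rewrite ltNge mulr_ge0_le0.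
rewrite -(pmulr_lgt0 _ X_gt0) cramer.
have := mulr_ge0 (ltW w2_gt0) Dj0_ge0; have := mulr_gt0 aj_gt0 Di0_gt0; lra.
Qed.

Lemma Uquad_le_critical p q x : 0 < hess_det -> dU1 p q = 0 -> dU2 p q = 0 ->
  Uquad x.1 x.2 <= Uquad p q.
Proof.
move=> det_gt0 dU1_0 dU2_0; rewrite -subr_le0.
have := Uquad_expand p q (x.1 - p) (x.2 - q).
rewrite !subrKC dU1_0 dU2_0 !mulr0 !add0r => ->.
exact: quad_form_le0 w1_lt0 det_gt0.
Qed.

Lemma psi_continuous : continuous (fun x : R * R => psi x.2).
Proof. by apply: affine_continuous => x /=; rewrite /psi; field; rewrite !lt0r_neq0. Qed.

Lemma phi_continuous : continuous (fun x : R * R => phi x.1).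
Proof. by apply: affine_continuous => x /=; rewrite /phi; field; rewrite ?lt0r_neq0. Qed.

Lemma theta1_continuous : continuous (fun x : R * R => theta1 x.1).
Proof. by apply: affine_continuous => x /=; rewrite /theta1; field; rewrite ?lt0r_neq0. Qed.

Lemma Uquad_continuous : continuous (fun x : R * R => Uquad x.1 x.2).
Proof.
have Di_cont : continuous (fun x : R * R => Di x.1 x.2).
  by apply: affine_continuous => x /=; rewrite /Di /pt_un; field; rewrite ?lt0r_neq0.
have Dj_cont : continuous (fun x : R * R => Dj x.1 x.2).
  by apply: affine_continuous => x /=; rewrite /Dj /pt_un; field; rewrite ?lt0r_neq0.
have X_cont : continuous (fun x : R * R => x.1 - Ci - CS).
  by apply: affine_continuous => x /=; ring.
have Y_cont : continuous (fun x : R * R => x.2 - CS).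
  by apply: affine_continuous => x /=; ring.
move=> x; rewrite /Uquad.
apply: cvgB; last exact: cvg_cst; apply: cvgB; last exact: cvg_cst.
by apply: cvgD; apply: cvgM; [exact: Di_cont | exact: X_cont | exact: Dj_cont | exact: Y_cont].
Qed.

Let fst_continuous : continuous (fun x : R * R => x.1).
Proof. by move=> x; exact: cvg_fst. Qed.
Let snd_continuous : continuous (fun x : R * R => x.2).
Proof. by move=> x; exact: cvg_snd. Qed.

Lemma Flin_closed : closed Flin.
Proof.
have -> : Flin = [set x | 0 <= x.1] `&` [set x | 0 <= x.2] `&` [set x | x.1 <= p_mx]
    `&` [set x | x.1 <= psi x.2] `&` [set x | x.2 <= phi x.1] `&` [set x | x.2 <= theta1 x.1].
  by apply/seteqP; split=> x /=; [case=> ? [? [? [? [? ?]]]] | case=> [[[[[? ?] ?] ?] ?] ?]].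
by repeat apply: closedI; apply: closed_le_fun;
  first [exact: cst_continuous | exact: fst_continuous | exact: snd_continuous
        | exact: psi_continuous | exact: phi_continuous | exact: theta1_continuous].
Qed.

Lemma Flin_compact : compact Flin.
Proof.
apply: (@subclosed_compact _ _ (`[0, p_mx]%classic `*` `[0, phi 0]%classic)).
- exact: Flin_closed.
- by apply: compact_setX; exact: segment_compact.
move=> x [p_ge0 [q_ge0 [p_le [_ [q_le _]]]]]; split; rewrite /= in_itv /= ?p_ge0 ?q_ge0 //.
apply: le_trans q_le _; rewrite /phi ler_pM2r ?invr_gt0 //.
have : 0 <= eps * ai * x.1 by rewrite !mulr_ge0 // ltW.
lra.
Qed.

Lemma Fopen_open : open Fopen.
Proof.
have -> : Fopen = [set x | x.1 < p_mx] `&` [set x | x.1 < psi x.2] `&` [set x | x.2 < phi x.1]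
    `&` [set x | x.2 < theta1 x.1].
  by apply/seteqP; split=> x /=; [case | case=> [[[? ?] ?] ?]].
by repeat apply: openI; apply: open_lt_fun;
  first [exact: cst_continuous | exact: fst_continuous | exact: snd_continuous
        | exact: psi_continuous | exact: phi_continuous | exact: theta1_continuous].
Qed.

Lemma L1_closed : closed (L1 P).
Proof. exact: closed_eq_fun snd_continuous phi_continuous. Qed.

Lemma L2_closed : closed (L2 P).
Proof. exact: closed_eq_fun fst_continuous psi_continuous. Qed.

Lemma L3_closed : closed (L3 P).
Proof. exact: closed_eq_fun snd_continuous theta1_continuous. Qed.

Lemma L4_closed : closed (L4 P).
Proof. by apply: closed_eq_fun; [exact: fst_continuous | exact: cst_continuous]. Qed.

(* [p_mono] maximises [(di - ai p) (p - Ci - CS)], the margin of [M_i] when [q = CS];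
   (A.1) makes it profitable. *)
Definition p_mono : R := (di + ai * (Ci + CS)) / (2 * ai).

Let ai_p_mono : ai * p_mono = (di + ai * (Ci + CS)) / 2.
Proof. by rewrite /p_mono; field; rewrite lt0r_neq0. Qed.

Let cost_le_di : ai * (Ci + CS) <= di.
Proof. by move: A1i (sqrtr_ge0 (ai * (OS + Oi))); lra. Qed.

Lemma Flin_p_mono : Flin (p_mono, CS).
Proof.
have cost_ge0 : 0 <= ai * (Ci + CS) by rewrite mulr_ge0 ?addr_ge0 // ltW.
have aip_le : ai * p_mono <= di by rewrite ai_p_mono; move: cost_le_di; lra.
have aip_ge0 : 0 <= ai * p_mono by rewrite ai_p_mono; move: cost_ge0 di_gt0; lra.
have p_ge0 : 0 <= p_mono by rewrite -(pmulr_rge0 _ ai_gt0).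
have e_aip_ge0 : 0 <= eps * (ai * p_mono) by rewrite mulr_ge0 // ltW.
have e_dj_ge0 : 0 <= eps * dj by rewrite mulr_ge0 // ltW.
split=> //; split=> //=; split; [|split; [|split]].
- by rewrite /p_mx ler_pdivlMr // mulrC; move: aip_le e_dj_ge0; lra.
- rewrite /psi ler_pdivlMr ?mulr_gt0 // mulrCA [p_mono * ai]mulrC.
  have : 0 <= eps ^+ 2 * (ai * p_mono) by rewrite mulr_ge0 ?sqr_ge0.
  have : 0 <= eps * aj * (Cj + CS) by rewrite !mulr_ge0 ?addr_ge0 // ltW.
  by move: aip_le e_dj_ge0; lra.
- rewrite /phi ler_pdivlMr // mulrC.
  have : eps * (ai * p_mono) <= eps * di by rewrite ler_pM2l.
  have : 0 <= eps * di by rewrite mulr_ge0 // ltW.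
  by move: A1j sj_ge0; lra.
- by rewrite /theta1 ler_pdivlMr // mulrC; move: A1j e_aip_ge0; lra.
Qed.

Lemma Uquad_p_mono_ge0 : 0 <= Uquad p_mono CS.
Proof.
set D := di - ai * (Ci + CS); set s := Num.sqrt (ai * (OS + Oi)).
have s_ge0 : 0 <= s := sqrtr_ge0 _.
have D_ge : 2 * s <= D by move: A1i; rewrite -/s /D; lra.
have D_ge0 : 0 <= D by move: D_ge s_ge0; lra.
have O_le : OS + Oi <= D ^+ 2 / (4 * ai).
  rewrite ler_pdivlMr ?mulr_gt0 //.
  have s_sqr : s ^+ 2 = ai * (OS + Oi) by rewrite sqr_sqrtr // mulr_ge0 ?addr_ge0 // ltW.
  have two_s_ge0 : 0 <= 2 * s by rewrite mulr_ge0.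
  by move: (ler_pM two_s_ge0 two_s_ge0 D_ge D_ge) s_sqr; rewrite !expr2; lra.
have pt_ge0 : 0 <= pt_un p_mono CS.
  have p_ge0 : 0 <= p_mono by case: Flin_p_mono.
  have : 0 <= dj + eps * ai * p_mono.
    by move: (mulr_ge0 (mulr_ge0 (ltW eps_gt0) (ltW ai_gt0)) p_ge0) dj_gt0; lra.
  by move=> ?; apply: addr_ge0; apply: divr_ge0 => //; [rewrite mulr_ge0 // ltW | rewrite addr_ge0].
have Di_p : Di p_mono CS = D / 2 + eps * aj * pt_un p_mono CS.
  by rewrite /Di ai_p_mono /D; field; rewrite ?lt0r_neq0.
have X_p : p_mono - Ci - CS = D / (2 * ai) by rewrite /p_mono /D; field; rewrite lt0r_neq0.
rewrite /Uquad subrr mulr0 addr0 Di_p X_p mulrDl.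
have -> : D / 2 * (D / (2 * ai)) = D ^+ 2 / (4 * ai) by field; rewrite lt0r_neq0.
have X_ge0 : 0 <= D / (2 * ai) by rewrite divr_ge0 // mulr_ge0 // ltW.
have := mulr_ge0 (mulr_ge0 (mulr_ge0 (ltW eps_gt0) (ltW aj_gt0)) pt_ge0) X_ge0.
by move: O_le; lra.
Qed.

Lemma Flin_Fopen x : Fopen x -> 0 <= x.1 -> 0 <= x.2 -> Flin x.
Proof. by case=> *; do !split=> //; apply: ltW. Qed.

Lemma Fopen_interior x : Fopen x -> 0 < x.1 -> 0 < x.2 -> interior Flin x.
Proof.
move=> x_open x1_gt0 x2_gt0.
apply: (@filterS _ _ _ (Fopen `&` [set y | 0 < y.1] `&` [set y | 0 < y.2])).
  by move=> y [[y_open y1_gt0] y2_gt0]; apply: Flin_Fopen; rewrite ?ltW.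
apply: open_nbhs_nbhs; split => //.
by apply: openI; [apply: openI; first exact: Fopen_open|];
  apply: open_lt_fun; first [exact: cst_continuous | exact: fst_continuous | exact: snd_continuous].
Qed.

Lemma demands_gt0 p q : p < psi q -> q < theta1 p -> 0 < Di p q /\ 0 < Dj p q.
Proof.
move=> p_lt q_lt; rewrite DiE DjE; split.
  by rewrite mulr_gt0 ?subr_gt0 // ?divr_gt0 ?mulr_gt0.
by rewrite ltr_wpDr // mulr_gt0 ?subr_gt0 // ?divr_gt0.
Qed.

Lemma dU_dir_le0_at_max c u v e : 0 < e ->
  (forall x, Flin x -> Uquad x.1 x.2 <= Uquad c.1 c.2) ->
  (forall t, 0 < t -> t < e -> Flin (c.1 + t * u, c.2 + t * v)) ->
  u * dU1 c.1 c.2 + v * dU2 c.1 c.2 <= 0.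
Proof.
move=> e_gt0 cmax c_dir.
apply: (slope_le0 (h := w1 * u ^+ 2 + w2 * u * v + w3 * v ^+ 2) e_gt0) => t t_gt0 t_lt_e.
have := cmax _ (c_dir t t_gt0 t_lt_e); rewrite -subr_le0 /= Uquad_expand.
by congr (_ <= 0); ring.
Qed.

(* One-sided first-order conditions along the four axis directions; at [p = 0] we would have
   [dU1 = w2 q + w4 > 0], and at [q = 0] with [p > 0], [dU2 = w2 p + w5 > 0]. *)
Lemma critical_of_interior_max c : Flin c -> Fopen c ->
  (forall x, Flin x -> Uquad x.1 x.2 <= Uquad c.1 c.2) ->
  [/\ 0 < c.1, 0 < c.2, dU1 c.1 c.2 = 0 & dU2 c.1 c.2 = 0].
Proof.
case=> c1_ge0 [c2_ge0 _] c_open cmax.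
have [e e_gt0 c_near] := nbhs_shift (open_nbhs_nbhs (conj Fopen_open c_open)).
have slope u v m : 0 < m -> `|u| <= 1 -> `|v| <= 1 ->
    (forall t, 0 < t -> t < m -> 0 <= c.1 + t * u /\ 0 <= c.2 + t * v) ->
    u * dU1 c.1 c.2 + v * dU2 c.1 c.2 <= 0.
  move=> m_gt0 u_le1 v_le1 stay_ge0.
  have d_gt0 : 0 < Num.min e m by rewrite lt_min e_gt0.
  apply: (dU_dir_le0_at_max d_gt0 cmax) => t t_gt0; rewrite lt_min => /andP[t_lt_e t_lt_m].
  have [p_ge0 q_ge0] := stay_ge0 t t_gt0 t_lt_m.
  have small w : `|w| <= 1 -> `|t * w| < e.
    by move=> w_le1; rewrite normrM gtr0_norm // (le_lt_trans (ler_piMr _ w_le1)) ?ltW.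
  by apply: (@Flin_Fopen (_, _)) p_ge0 q_ge0; apply: c_near; apply: small.
have dU1_le0 : dU1 c.1 c.2 <= 0.
  have := slope 1 0 e e_gt0; rewrite normr1 normr0 ler01 mul1r mul0r addr0.
  by apply=> // t t_gt0 _; rewrite mulr1 mulr0 addr0; split=> //; rewrite addr_ge0 // ltW.
have dU2_le0 : dU2 c.1 c.2 <= 0.
  have := slope 0 1 e e_gt0; rewrite normr1 normr0 ler01 mul1r mul0r add0r.
  by apply=> // t t_gt0 _; rewrite mulr1 mulr0 addr0; split=> //; rewrite addr_ge0 // ltW.
have c1_gt0 : 0 < c.1.
  rewrite lt_neqAle c1_ge0 andbT; apply/eqP => c1_0; move: dU1_le0; rewrite /dU1 -c1_0.
  by move: w4_gt0 (mulr_ge0 (ltW w2_gt0) c2_ge0); lra.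
have c2_gt0 : 0 < c.2.
  rewrite lt_neqAle c2_ge0 andbT; apply/eqP => c2_0; move: dU2_le0; rewrite /dU2 -c2_0.
  by move: w5_ge0 (mulr_gt0 w2_gt0 c1_gt0); lra.
have dU1_ge0 : 0 <= dU1 c.1 c.2.
  have := slope (-1) 0 _ c1_gt0; rewrite normrN normr1 normr0 ler01.
  rewrite mul0r addr0 mulN1r oppr_le0; apply=> // t t_gt0 t_lt.
  by rewrite mulr0 addr0 mulrN1; split=> //; rewrite subr_ge0 ltW.
have dU2_ge0 : 0 <= dU2 c.1 c.2.
  have := slope 0 (-1) _ c2_gt0; rewrite normrN normr1 normr0 ler01.
  rewrite mul0r add0r mulN1r oppr_le0; apply=> // t t_gt0 t_lt.
  by rewrite mulr0 addr0 mulrN1; split=> //; rewrite subr_ge0 ltW.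
by split=> //; apply/eqP; rewrite eq_le ?dU1_le0 ?dU2_le0.
Qed.

Lemma Uquad_max_interior : interior Flin (p_co, q_co) ->
  Flin (p_co, q_co) /\ forall x, Flin x -> Uquad x.1 x.2 <= Uquad p_co q_co.
Proof.
move=> co_int; have co_in : Flin (p_co, q_co) := nbhs_singleton co_int.
split=> // x x_in.
have [e e_gt0 co_near] := nbhs_shift co_int.
have half_e : `|e / 2| < e by rewrite gtr0_norm ?divr_gt0 // ltr_pdivrMr //; lra.
have nhalf_e : `|- (e / 2)| < e by rewrite normrN.
have zero_e : `|0 : R| < e by rewrite normr0.
have [p_gt0 p_lt q_lt] : [/\ 0 < p_co, p_co < psi q_co & q_co < theta1 p_co].
  have [left _] := co_near _ _ nhalf_e zero_e.
  have [_ [_ [_ [right _]]]] := co_near _ _ half_e zero_e.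
  have [_ [_ [_ [_ [_ up]]]]] := co_near _ _ zero_e half_e.
  by rewrite /= !addr0 in left right up; split; lra.
have det_neq0 : hess_det != 0.
  (* [p_co] is a quotient by [hess_det]; division by 0 would make it 0. *)
  by apply: contraTneq p_gt0 => det0; rewrite /p_co -/hess_det det0 invr0 mulr0 ltxx.
have [dU1_0 dU2_0] := dU_co det_neq0.
have [Di_gt0 Dj_gt0] := demands_gt0 p_lt q_lt.
exact: Uquad_le_critical (hess_det_gt0 dU1_0 dU2_0 Di_gt0 Dj_gt0) dU1_0 dU2_0.
Qed.

Lemma Uquad_max_on_lines : ~ interior Flin (p_co, q_co) ->
  exists2 y, Flin y /\ (L1 P y \/ L2 P y \/ L3 P y \/ L4 P y) &
    forall x, Flin x -> Uquad x.1 x.2 <= Uquad y.1 y.2.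
Proof.
move=> not_int.
have [[p q] c_in cmax] := compact_argmax (ex_intro _ _ Flin_p_mono) Flin_compact Uquad_continuous.
exists (p, q) => //; split=> //; apply: contra_notP not_int => off_lines.
have c_open : Fopen (p, q).
  case: c_in => _ [_ [p_le [p_le_psi [q_le_phi q_le_theta]]]].
  split; rewrite lt_neqAle ?p_le ?p_le_psi ?q_le_phi ?q_le_theta andbT;
    apply/eqP => line; case: off_lines.
  - by do 3 right.
  - by right; left.
  - by left.
  - by do 2 right; left.
have [p_gt0 q_gt0 dU1_0 dU2_0] := critical_of_interior_max c_in c_open cmax.
have [_ p_lt _ q_lt] := c_open.
have [Di_gt0 Dj_gt0] := demands_gt0 p_lt q_lt.
have det_gt0 := hess_det_gt0 dU1_0 dU2_0 Di_gt0 Dj_gt0.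
have [<- <-] := critical_unique (lt0r_neq0 det_gt0) dU1_0 dU2_0.
exact: Fopen_interior.
Qed.

Lemma UV_max_interior : interior (Fplus P) (p_co, q_co) ->
  is_max (Fplus P) (fun x => UV P x.1 x.2) (UV P p_co q_co).
Proof.
rewrite FplusE => /Uquad_max_interior [co_in co_max]; split; first by exists (p_co, q_co).
by move=> x x_in; rewrite (UV_Uquad x_in) (UV_Uquad co_in); exact: co_max.
Qed.

Lemma UV_max_lines : ~ interior (Fplus P) (p_co, q_co) ->
  exists M m1 m2 m3 m4,
    let U := fun x : R * R => UV P x.1 x.2 in
    is_max (Fplus P) U M /\
    is_max0 (Fplus P `&` L1 P) U m1 /\ is_max0 (Fplus P `&` L2 P) U m2 /\
    is_max0 (Fplus P `&` L3 P) U m3 /\ is_max0 (Fplus P `&` L4 P) U m4 /\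
    M = Num.max (Num.max m1 m2) (Num.max m3 m4).
Proof.
rewrite FplusE => /Uquad_max_on_lines [y [y_in y_line] y_max].
set U := fun x : R * R => UV P x.1 x.2.
have piece L : closed L -> exists m, is_max0 (Flin `&` L) U m.
  move=> L_closed; apply: (exists_is_max0 _ Uquad_continuous).
    exact: subclosed_compact (closedI Flin_closed L_closed) Flin_compact (@subIsetl _ _ _).
  by move=> x [x_in _]; exact: UV_Uquad.
have [m1 max1] := piece _ L1_closed; have [m2 max2] := piece _ L2_closed.
have [m3 max3] := piece _ L3_closed; have [m4 max4] := piece _ L4_closed.
have U_le x : Flin x -> U x <= U y.
  by move=> x_in; rewrite /U (UV_Uquad x_in) (UV_Uquad y_in); exact: y_max.
have U_ge0 : 0 <= U y.
  by apply: le_trans (U_le _ Flin_p_mono); rewrite /U (UV_Uquad Flin_p_mono) Uquad_p_mono_ge0.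
have m_le L m : is_max0 (Flin `&` L) U m -> m <= U y.
  by apply: is_max0_le U_ge0 _ => x [x_in _]; exact: U_le.
exists (U y), m1, m2, m3, m4; split; first by split; [exists y | exact: U_le].
do 4 (split; first by []).
apply/eqP; rewrite eq_le !ge_max !(m_le _ _ max1, m_le _ _ max2, m_le _ _ max3, m_le _ _ max4).
rewrite !le_max; case: y_line => [yL | [yL | [yL | yL]]].
- by rewrite (is_max0_ge (conj y_in yL) max1).
- by rewrite (is_max0_ge (conj y_in yL) max2) orbT.
- by rewrite (is_max0_ge (conj y_in yL) max3) /= orbT.
- by rewrite (is_max0_ge (conj y_in yL) max4) !orbT.
Qed.
End Model.

Unset Implicit Arguments.

Theorem theorem1 (R : realType) (P : params R) :
  standing P -> A1 P -> A2 P ->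
  let U := fun x : R * R => UV P x.1 x.2 in
  let xco := (p_co P, q_co P) in
  (interior (Fplus P) xco -> is_max (Fplus P) U (U xco)) /\
  (~ interior (Fplus P) xco ->
     exists M m1 m2 m3 m4,
       is_max (Fplus P) U M /\
       is_max0 (Fplus P `&` L1 P) U m1 /\ is_max0 (Fplus P `&` L2 P) U m2 /\
       is_max0 (Fplus P `&` L3 P) U m3 /\ is_max0 (Fplus P `&` L4 P) U m4 /\
       M = Num.max (Num.max m1 m2) (Num.max m3 m4)).
Proof.
case=> di_gt0 [dj_gt0 [ai_gt0 [aj_gt0 [eps_gt0 [eps_le1 [Ci_ge0 [Cj_ge0 [CS_ge0
  [Oi_ge0 [Oj_ge0 OS_ge0]]]]]]]]]].
case=> A1i A1j_max A2 U xco.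
have A1j : aj P * (CS P + Cj P) + 2 * Num.sqrt (aj P * Oj P) <= dj P.
  by apply: le_trans A1j_max; rewrite lerD2l ler_pM2l // le_max lexx orbT.
split; first by move=> co_int; apply: UV_max_interior.
by move=> not_int; apply: UV_max_lines.
Qed.
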